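(* Let $\gamma\in\mathbb Q^n$. There exists $b\in\mathbb L$ such that $\mathcal S_\Sigma(\gamma-b)\subset\mathcal C_\Sigma$, or equivalently $\mathcal S_\Sigma(\gamma)\subset(-b)+\mathcal C_\Sigma$.
   Context: $N\cong\mathbb Z^d$ lattice, $\mathcal A=\{v_1,\dots,v_n\}\subset N$ generating $N$ with a homomorphism $\mathrm h:N\to\mathbb Z$, $\mathrm h(v_j)=1$; $\mathbb L=\{l\in\mathbb Z^n:\sum l_jv_j=0\}$; $\Sigma$ the simplicial fan supported on $\mathbb R_{\ge0}\mathrm{Conv}(\mathcal A)$ from a regular triangulation with vertices in $\mathcal A$, $\Sigma(d)$ its maximal cones. For $\gamma\in\mathbb Q^n$ and $l\in\mathbb L$, $\mathrm{Supp}(l)=\{v_j:l_j+\gamma_j\notin\mathbb Z_{\ge0}\}$, and $\mathcal S_\Sigma(\gamma)$ is the set of $l\in\mathbb L$ such that all elements of $\mathrm{Supp}(l)$ generate rays of a single maximal cone of $\Sigma$. For $\sigma\in\Sigma(d)$, $\mathcal C_\sigma=\{x\in\mathbb L\otimes\mathbb R:x_j\ge0$ whenever $\mathbb R_{\ge0}v_j$ is not a ray of $\sigma\}$ and $\mathcal C_\Sigma=\sum_{\sigma\in\Sigma(d)}\mathcal C_\sigma$ (Minkowski sum). *)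

From HB Require Import structures.
From mathcomp Require Import all_boot all_order all_algebra.
From mathcomp Require Import reals.
Set Implicit Arguments. Unset Strict Implicit. Unset Printing Implicit Defensive.
Import Order.TTheory GRing.Theory Num.Theory.
Local Open Scope ring_scope.

(* Conventions.
   - N = Z^d is represented by integer row vectors 'rV[int]_d.
   - The configuration A = {v_1,...,v_n} is the integer matrix V : 'M[int]_(n,d)
     whose j-th row is v_j.
   - Vectors of Z^n, Q^n, R^n are row vectors 'rV_n; the relation
     sum_j l_j v_j = 0 reads  l *m V = 0. *)

Section Defs.
Variables (R : realType) (n d : nat) (V : 'M[int]_(n, d)).

Definition VR : 'M[R]_(n, d) := map_mx (fun z : int => z%:~R) V.

Definition generates_lattice : Prop :=
  forall u : 'rV[int]_d, exists l : 'rV[int]_n, l *m V = u.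

Definition has_height_one : Prop :=
  exists w : 'cV[int]_d, forall j : 'I_n, (V *m w) j 0 = 1.

Definition in_L (l : 'rV[int]_n) : Prop := l *m V = 0.

Definition in_LR (x : 'rV[R]_n) : Prop := x *m VR = 0.

(* Regular subdivision induced by a height function omega : a linear
   functional psi (a column vector) is "lower" if psi(v_j) <= omega_j for
   all j; the associated cell (a lower face of the lifted configuration) is
   the set of j with psi(v_j) = omega_j. *)
Definition lower (omega : 'I_n -> R) (psi : 'cV[R]_d) : Prop :=
  forall j : 'I_n, (VR *m psi) j 0 <= omega j.

Definition cell (omega : 'I_n -> R) (psi : 'cV[R]_d) : {set 'I_n} :=
  [set j | (VR *m psi) j 0 == omega j].

Definition lin_indep (S : {set 'I_n}) : Prop :=
  forall c : 'rV[R]_n, (forall j, j \notin S -> c 0 j = 0) ->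
    c *m VR = 0 -> c = 0.

(* omega induces a regular triangulation: every cell is a simplex
   (linear independence of vectors on the hyperplane h = 1 is affine
   independence of the points). *)
Definition regular_triangulation (omega : 'I_n -> R) : Prop :=
  forall psi, lower omega psi -> lin_indep (cell omega psi).

(* Sigma(d): the maximal (full-dimensional) cones of the fan Sigma, given by
   the index sets of their ray generators. *)
Definition max_cone (omega : 'I_n -> R) (sigma : {set 'I_n}) : Prop :=
  #|sigma| = d /\ exists psi, lower omega psi /\ cell omega psi = sigma.

Definition is_ray (sigma : {set 'I_n}) (j : 'I_n) : Prop :=
  exists2 i, i \in sigma & row i V = row j V.

Definition in_Supp (gamma : 'rV[rat]_n) (l : 'rV[int]_n) (j : 'I_n) : Prop :=
  ~ exists k : nat, (l 0 j)%:~R + gamma 0 j = k%:R.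

Definition in_S (omega : 'I_n -> R) (gamma : 'rV[rat]_n) (l : 'rV[int]_n)
  : Prop :=
  in_L l /\ exists sigma, max_cone omega sigma /\
    forall j, in_Supp gamma l j -> is_ray sigma j.

Definition in_C_sigma (sigma : {set 'I_n}) (x : 'rV[R]_n) : Prop :=
  in_LR x /\ forall j, ~ is_ray sigma j -> 0 <= x 0 j.

Definition in_C_Sigma (omega : 'I_n -> R) (x : 'rV[R]_n) : Prop :=
  exists xs : {set 'I_n} -> 'rV[R]_n,
    (forall sigma, max_cone omega sigma -> in_C_sigma sigma (xs sigma)) /\
    (forall sigma, ~ max_cone omega sigma -> xs sigma = 0) /\
    x = \sum_(sigma : {set 'I_n}) xs sigma.

End Defs.

From HB Require Import structures.
From mathcomp Require Import all_boot all_order all_algebra.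
From mathcomp Require Import reals.
From mathcomp Require Import lra zify.
From Stdlib Require Import Classical.
Import Order.TTheory GRing.Theory Num.Theory.
Local Open Scope ring_scope.
Set Implicit Arguments. Unset Strict Implicit. Unset Printing Implicit Defensive.

(* For a maximal cone sigma, the vectors v_j (j in sigma) form a basis, so
   every w in R^n can be corrected on the coordinates of sigma into a real
   relation P_sigma(w) that agrees with w off sigma.  Fix one maximal cone
   sigma_0 and an integer relation b that is very large off sigma_0, larger
   than all |P_sigma(-gamma)_j| (finitely many sigma).  If l lies in
   S_Sigma(gamma - b) with cone sigma, split l = y + (l - y) with
   y = P_sigma(-gamma) + b: y is in C_{sigma_0} since b dominates off sigma_0,
   and l - y is in C_sigma because off sigma its coordinates are
   l_j + gamma_j - b_j, a nonnegative integer outside Supp(l). *)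

Section RowsubOne.
Variables (K : pzRingType) (m n : nat) (f : 'I_m -> 'I_n).

Lemma mul_rowsub1E (c : 'rV[K]_m) j :
  (c *m rowsub f 1%:M) 0 j = \sum_(i | f i == j) c 0 i.
Proof.
rewrite mxE [RHS]big_mkcond; apply: eq_bigr => i _; rewrite !mxE.
by case: eqP => _; rewrite ?mulr1 ?mulr0.
Qed.

Lemma mul_rowsub1_out (c : 'rV[K]_m) j :
  j \notin codom f -> (c *m rowsub f 1%:M) 0 j = 0.
Proof.
move=> jf; rewrite mul_rowsub1E big1 // => i /eqP fij.
by move: jf; rewrite -fij codom_f.
Qed.

Lemma mul_rowsub1_inj (c : 'rV[K]_m) i :
  injective f -> (c *m rowsub f 1%:M) 0 (f i) = c 0 i.
Proof. by move=> finj; rewrite mul_rowsub1E (big_pred1 i) // => i'; rewrite inj_eq. Qed.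

End RowsubOne.

(* [adjproj A f w] is [\det B] times the projection of [w] onto the left
   kernel of [A] along the coordinates in the image of [f], where [B] is the
   square submatrix of the rows of [A] selected by [f]; using the adjugate
   instead of the inverse keeps it integral. *)
Section AdjugateProjection.
Variables (K : comPzRingType) (m n : nat) (A : 'M[K]_(m, n)) (f : 'I_n -> 'I_m).

Definition adjproj (w : 'rV[K]_m) : 'rV[K]_m :=
  \det (rowsub f A) *: w - w *m A *m \adj (rowsub f A) *m rowsub f 1%:M.

Lemma adjproj_ker w : adjproj w *m A = 0.
Proof.
rewrite mulmxBl -!mulmxA -rowsubE mul_adj_mx mul_mx_scalar.
by rewrite -scalemxAr -scalemxAl subrr.
Qed.

Lemma adjproj_out w j :
  j \notin codom f -> adjproj w 0 j = \det (rowsub f A) * w 0 j.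
Proof.
by move=> jf; rewrite mxE [in X in _ + X]mxE mul_rowsub1_out // oppr0 addr0 mxE.
Qed.

End AdjugateProjection.

Section KernelProjection.
Variables (F : fieldType) (m n : nat) (A : 'M[F]_(m, n)) (f : 'I_n -> 'I_m).

Definition kerproj (w : 'rV[F]_m) : 'rV[F]_m :=
  (\det (rowsub f A))^-1 *: adjproj A f w.

Lemma kerproj_ker w : kerproj w *m A = 0.
Proof. by rewrite -scalemxAl adjproj_ker scaler0. Qed.

Lemma kerproj_out w j :
  \det (rowsub f A) != 0 -> j \notin codom f -> kerproj w 0 j = w 0 j.
Proof. by move=> detB jf; rewrite mxE adjproj_out // mulKf. Qed.

End KernelProjection.

Lemma exists_nat_lower_bound (R : archiFieldType) (I : finType) (x : I -> R) :
  exists N : nat, forall i, - N%:R <= x i.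
Proof.
pose B := \sum_i `|x i|.
have B_ge0 : 0 <= B by apply: sumr_ge0.
exists (Num.Def.archi_bound B) => i.
have xB : `|x i| <= B by rewrite /B (bigD1 i) //= lerDl sumr_ge0.
exact: lerNnormlW (le_trans xB (ltW (archi_boundP B_ge0))).
Qed.

Local Notation map_int := (map_mx (fun z : int => z%:~R)).

Section Cones.
Variables (R : realType) (n d : nat) (V : 'M[int]_(n, d)).

Lemma in_LR_map_int (l : 'rV[int]_n) : in_L V l -> in_LR V (map_int l : 'rV[R]_n).
Proof. by rewrite /in_LR /VR -map_mxM => ->; rewrite map_mx0. Qed.

Lemma notin_not_ray (s : {set 'I_n}) j : ~ is_ray V s j -> j \notin s.
Proof. by move=> nray; apply/negP => js; apply: nray; exists j. Qed.

Lemma in_C_sigma0 s : in_C_sigma V s (0 : 'rV[R]_n).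
Proof. by split=> [|j _]; rewrite ?/in_LR ?mul0mx ?mxE. Qed.

Lemma in_C_sigmaD s (x y : 'rV[R]_n) :
  in_C_sigma V s x -> in_C_sigma V s y -> in_C_sigma V s (x + y).
Proof.
move=> [xL x_ge0] [yL y_ge0]; split=> [|j nray].
  by rewrite /in_LR mulmxDl xL yL addr0.
by rewrite mxE addr_ge0 ?x_ge0 ?y_ge0.
Qed.

Lemma in_C_SigmaD (omega : 'I_n -> R) s t (x y : 'rV[R]_n) :
  max_cone V omega s -> max_cone V omega t ->
  in_C_sigma V s x -> in_C_sigma V t y -> in_C_Sigma V omega (x + y).
Proof.
move=> smax tmax xC yC.
exists (fun u => (if u == s then x else 0) + (if u == t then y else 0)).
split; [|split].
- move=> u _; apply: in_C_sigmaD.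
    by case: eqP => [->|_]; [exact: xC | exact: in_C_sigma0].
  by case: eqP => [->|_]; [exact: yC | exact: in_C_sigma0].
- move=> u umax.
  by do 2![case: eqP => [eq_u|_]; first by case: umax; rewrite eq_u]; rewrite addr0.
- by rewrite big_split /= -!big_mkcond !big_pred1_eq.
Qed.

Lemma det_rowsub_VR (f : 'I_d -> 'I_n) :
  \det (rowsub f (VR R V)) = (\det (rowsub f V))%:~R.
Proof. by rewrite -det_map_mx; congr (\det _); apply/matrixP => i j; rewrite !mxE. Qed.

Lemma lin_indep_det_rowsub_neq0 (s : {set 'I_n}) (f : 'I_d -> 'I_n) :
  lin_indep R V s -> injective f -> {subset codom f <= s} ->
  \det (rowsub f (VR R V)) != 0.
Proof.
move=> indep finj fs; apply/negP => /det0P [a a_neq0 aV].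
have a0 : a *m rowsub f 1%:M = 0.
  apply: indep => [j js|]; last by rewrite -mulmxA -rowsubE.
  by apply: mul_rowsub1_out; apply: contra js; apply: fs.
by case/eqP: a_neq0; apply/rowP => i; rewrite -(mul_rowsub1_inj a i finj) a0 !mxE.
Qed.

Lemma max_cone_basis (omega : 'I_n -> R) s :
  regular_triangulation V omega -> max_cone V omega s ->
  exists f : {ffun 'I_d -> 'I_n},
    [/\ injective f, {subset codom f <= s} & \det (rowsub f (VR R V)) != 0].
Proof.
move=> RT [card_s [psi [psi_lower cell_s]]].
pose f := [ffun i => enum_val (cast_ord (esym card_s) i)].
have finj : injective f.
  by move=> i i'; rewrite !ffunE => /enum_val_inj/cast_ord_inj.
have fs : {subset codom f <= s}.
  by move=> _ /codomP [i ->]; rewrite ffunE enum_valP.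
exists f; split=> //; apply: lin_indep_det_rowsub_neq0 finj fs.
by rewrite -cell_s; apply: RT.
Qed.

Lemma relation_large_off (f : 'I_d -> 'I_n) (N : nat) :
  \det (rowsub f V) != 0 ->
  exists b : 'rV[int]_n, in_L V b /\ forall j, j \notin codom f -> N%:Z <= b 0 j.
Proof.
set D := \det _ => D_neq0.
exists ((N%:Z * D) *: adjproj V f (const_mx 1)); split.
  by rewrite /in_L -scalemxAl adjproj_ker scaler0.
move=> j jf; rewrite mxE adjproj_out // mxE mulr1 -mulrA.
rewrite -/D ler_peMr //; move: D_neq0; clearbody D; lia.
Qed.

End Cones.

Lemma not_in_Supp_ge0 (R : numFieldType) n (gamma : 'rV[rat]_n) (b l : 'rV[int]_n) j :
  ~ in_Supp (gamma - map_int b) l j ->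
  0 <= (l 0 j)%:~R + ratr (gamma 0 j) - (b 0 j)%:~R :> R.
Proof.
move=> /NNPP [k /(congr1 (@ratr R))].
rewrite rmorphD rmorph_int !mxE rmorphB /= !rmorph_int rmorph_nat addrA => ->.
exact: ler0n.
Qed.

Theorem lemma2p6 (R : realType) (n d : nat) (V : 'M[int]_(n, d))
    (omega : 'I_n -> R) :
  generates_lattice V -> has_height_one V ->
  regular_triangulation V omega ->
  forall gamma : 'rV[rat]_n,
  exists b : 'rV[int]_n, in_L V b /\
    forall l : 'rV[int]_n,
      in_S V omega (gamma - map_mx (fun z : int => z%:~R) b) l ->
      in_C_Sigma V omega (map_mx (fun z : int => z%:~R) l).
Proof.
move=> _ _ RT gamma.
have [[s0 s0max] | no_cone] := classic (exists s0, max_cone V omega s0); last first.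
  exists 0; split=> [|l [_ [s [smax _]]]]; first exact: mul0mx.
  by case: no_cone; exists s.
have [f0 [_ f0s0 f0det]] := max_cone_basis RT s0max.
pose gR := map_mx (@ratr R) gamma.
pose y (f : {ffun 'I_d -> 'I_n}) := kerproj (VR R V) f (- gR).
have [N yN] := exists_nat_lower_bound (fun p : {ffun 'I_d -> 'I_n} * 'I_n => y p.1 0 p.2).
have f0det_int : \det (rowsub f0 V) != 0 by rewrite -(intr_eq0 R) -det_rowsub_VR.
have [b [bL bN]] := relation_large_off N f0det_int.
exists b; split=> // l [lL [s [smax supp]]].
have [f [_ fs fdet]] := max_cone_basis RT smax.
have y_out j : j \notin s -> y f 0 j = - ratr (gamma 0 j).
  by move=> js; rewrite kerproj_out ?mxE //; apply: contra js; apply: fs.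
have yL : in_LR V (y f + map_int b).
  by rewrite /in_LR mulmxDl kerproj_ker in_LR_map_int // add0r.
rewrite -(subrK (y f + map_int b) (map_int l)).
apply: (in_C_SigmaD smax s0max); split=> [|j nray].
- by rewrite /in_LR mulmxBl in_LR_map_int // yL subrr.
- have := not_in_Supp_ge0 R (fun Supp_j => nray (supp j Supp_j)).
  rewrite mxE [X in _ -> _ <= _ + X]mxE [X in _ -> _ <= _ - X]mxE.
  rewrite y_out ?(notin_not_ray nray) // !mxE.
  lra.
- exact: yL.
- have := yN (f, j); have := bN j (contra (f0s0 j) (notin_not_ray nray)).
  rewrite -(ler_int R) [X in _ -> _ -> _ <= X]mxE [map_int b 0 j]mxE /=.
  lra.
Qed.
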